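(* Let $(\mathbf{x}_i,y_i)_{i=1}^n\subset\mathbb{R}^d\times\{\pm1\}$ satisfy $\|\mathbf{x}_i\|\le1$ and $y_i\mathbf{x}_i^\top\mathbf{w}_*\ge\gamma$ for some $\gamma>0$ and unit vector $\mathbf{w}_*$. Let $L(\mathbf{w})=\frac1n\sum_i\ln(1+\exp(-y_i\mathbf{x}_i^\top\mathbf{w}))$ and run GD $\mathbf{w}_{t+1}=\mathbf{w}_t-\eta\nabla L(\mathbf{w}_t)$ with any $\eta>0$ and any $\mathbf{w}_0$. For any $\mathbf{u}_1\in\mathbb{R}^d$, let $\mathbf{u}_2=\frac{\eta}{2\gamma}\mathbf{w}_*$ and $\mathbf{u}=\mathbf{u}_1+\mathbf{u}_2$. Then for all $t\ge1$, \[\frac{\|\mathbf{w}_t-\mathbf{u}\|^2}{2\eta t}+\frac1t\sum_{k=0}^{t-1}L(\mathbf{w}_k)\le L(\mathbf{u}_1)+\frac{\|\mathbf{w}_0-\mathbf{u}\|^2}{2\eta t}.\] *)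

From HB Require Import structures.
From mathcomp Require Import all_boot all_order all_algebra.
From mathcomp Require Import all_classical all_reals all_analysis.
Set Implicit Arguments. Unset Strict Implicit. Unset Printing Implicit Defensive.
Import Order.TTheory GRing.Theory Num.Theory.
Local Open Scope ring_scope.

Definition dotv {R : realType} {d : nat} (a b : 'rV[R]_d) : R :=
  \sum_(j < d) a ord0 j * b ord0 j.
Definition sqnorm {R : realType} {d : nat} (a : 'rV[R]_d) : R := dotv a a.

Definition logloss {R : realType} {d n : nat} (x : 'I_n -> 'rV[R]_d)
  (y : 'I_n -> R) (w : 'rV[R]_d) : R :=
  n%:R^-1 * \sum_(i < n) ln (1 + expR (- (y i * dotv (x i) w))).

Definition logloss_grad {R : realType} {d n : nat} (x : 'I_n -> 'rV[R]_d)
  (y : 'I_n -> R) (w : 'rV[R]_d) : 'rV[R]_d :=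
  n%:R^-1 *: \sum_(i < n)
    ((- (expR (- (y i * dotv (x i) w)) / (1 + expR (- (y i * dotv (x i) w))))
       * y i) *: x i).

Fixpoint gd_iter {R : realType} {d n : nat} (x : 'I_n -> 'rV[R]_d)
  (y : 'I_n -> R) (eta : R) (w0 : 'rV[R]_d) (t : nat) : 'rV[R]_d :=
  match t with
  | 0%N => w0
  | t'.+1 => let w := gd_iter x y eta w0 t' in w - eta *: logloss_grad x y w
  end.

From HB Require Import structures.
From mathcomp Require Import all_boot all_order all_algebra.
From mathcomp Require Import all_classical all_reals all_analysis.
From mathcomp Require Import ring lra.
Import Order.TTheory GRing.Theory Num.Theory.
Local Open Scope ring_scope.

(* Compare every iterate with the reference point u = u1 + eta/(2 gamma) w*.
   Expanding |w_(k+1) - u|^2 = |w_k - u|^2 - 2 eta <g, w_k - u> + eta^2 |g|^2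
   with g = grad L(w_k), convexity of the logistic loss bounds the part of the
   cross term coming from u1 by 2 eta (L(u1) - L(w_k)).  The part coming from
   eta/(2 gamma) w* is at most -eta^2 G, where G is the mean logistic weight of
   w_k, because every example has margin gamma along w*; and it pays for
   eta^2 |g|^2 <= eta^2 G^2 <= eta^2 G.  Hence
   |w_(k+1) - u|^2 <= |w_k - u|^2 + 2 eta (L(u1) - L(w_k)), and the theorem is
   the sum of these inequalities over k < t, divided by 2 eta t. *)

Section InnerProduct.
Context {R : realType} {d : nat}.
Implicit Types (a b c : 'rV[R]_d) (k : R).

Lemma dotvC a b : dotv a b = dotv b a.
Proof. by apply: eq_bigr => j _; rewrite mulrC. Qed.

Lemma dotvDl a b c : dotv (a + b) c = dotv a c + dotv b c.
Proof. by rewrite /dotv -big_split; apply: eq_bigr => j _; rewrite mxE mulrDl. Qed.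

Lemma dotvZl k a b : dotv (k *: a) b = k * dotv a b.
Proof. by rewrite /dotv mulr_sumr; apply: eq_bigr => j _; rewrite mxE mulrA. Qed.

Lemma dotvNl a b : dotv (- a) b = - dotv a b.
Proof. by rewrite -scaleN1r dotvZl mulN1r. Qed.

Lemma dotvDr a b c : dotv a (b + c) = dotv a b + dotv a c.
Proof. by rewrite dotvC dotvDl !(dotvC a). Qed.

Lemma dotvZr k a b : dotv a (k *: b) = k * dotv a b.
Proof. by rewrite dotvC dotvZl dotvC. Qed.

Lemma dotvNr a b : dotv a (- b) = - dotv a b.
Proof. by rewrite dotvC dotvNl dotvC. Qed.

Lemma dotvBr a b c : dotv a (b - c) = dotv a b - dotv a c.
Proof. by rewrite dotvDr dotvNr. Qed.

Lemma dotv_suml n (v : 'I_n -> 'rV[R]_d) c :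
  dotv (\sum_(i < n) v i) c = \sum_(i < n) dotv (v i) c.
Proof.
by rewrite /dotv exchange_big; apply: eq_bigr => j _; rewrite summxE mulr_suml.
Qed.

Lemma dotv_sumr n (v : 'I_n -> 'rV[R]_d) c :
  dotv c (\sum_(i < n) v i) = \sum_(i < n) dotv c (v i).
Proof. by rewrite dotvC dotv_suml; apply: eq_bigr => i _; rewrite dotvC. Qed.

Lemma sqnorm_ge0 a : 0 <= sqnorm a.
Proof. by apply: sumr_ge0 => j _; rewrite -expr2 sqr_ge0. Qed.

Lemma sqnormD a b : sqnorm (a + b) = sqnorm a + 2 * dotv a b + sqnorm b.
Proof. by rewrite /sqnorm dotvDl !dotvDr (dotvC b a); ring. Qed.

Lemma sqnormN a : sqnorm (- a) = sqnorm a.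
Proof. by rewrite /sqnorm dotvNl dotvNr opprK. Qed.

Lemma sqnormZ k a : sqnorm (k *: a) = k ^+ 2 * sqnorm a.
Proof. by rewrite /sqnorm dotvZl dotvZr mulrA expr2. Qed.

Lemma sqnormB a b : sqnorm (a - b) = sqnorm a - 2 * dotv a b + sqnorm b.
Proof. by rewrite sqnormD dotvNr sqnormN mulrN. Qed.

Lemma normr_dotv_le1 a b :
  sqnorm a <= 1 -> sqnorm b <= 1 -> `|dotv a b| <= 1.
Proof.
move=> a_le1 b_le1; have := sqnorm_ge0 (a + b); have := sqnorm_ge0 (a - b).
rewrite sqnormB sqnormD ler_norml; lra.
Qed.

Lemma sqnorm_sumZ_le n (c : 'I_n -> R) (v : 'I_n -> 'rV[R]_d) :
  (forall i, sqnorm (v i) <= 1) ->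
  sqnorm (\sum_(i < n) c i *: v i) <= (\sum_(i < n) `|c i|) ^+ 2.
Proof.
move=> v_le1; rewrite /sqnorm dotv_suml expr2 mulr_suml.
apply: ler_sum => i _; rewrite dotv_sumr mulr_sumr; apply: ler_sum => j _.
rewrite dotvZl dotvZr mulrA (le_trans (ler_norm _)) // !normrM.
by rewrite ler_piMr ?mulr_ge0 ?normr_dotv_le1.
Qed.

Lemma sqnorm_descent_step (eta gamma G Lw Lu : R) (w g u1 wstar : 'rV[R]_d) :
  0 < eta -> 0 < gamma ->
  Lw + dotv g (u1 - w) <= Lu ->
  dotv g wstar <= - (gamma * G) ->
  sqnorm g <= G ->
  sqnorm (w - eta *: g - (u1 + (eta / (2 * gamma)) *: wstar))
    <= sqnorm (w - (u1 + (eta / (2 * gamma)) *: wstar)) + 2 * eta * (Lu - Lw).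
Proof.
move=> eta_gt0 gamma_gt0 tangent align g_small.
set u := u1 + _.
have cross : dotv (w - u) g = - dotv g (u1 - w) - eta / (2 * gamma) * dotv g wstar.
  by rewrite dotvC dotvBr /u dotvDr dotvZr dotvBr; ring.
have pay : eta / (2 * gamma) * dotv g wstar <= - (eta / 2 * G).
  have -> : - (eta / 2 * G) = eta / (2 * gamma) * - (gamma * G).
    by field; rewrite gt_eqF.
  by rewrite ler_wpM2l // divr_ge0 ?mulr_ge0 ?ltW.
rewrite addrAC [sqnorm (w - u - _)]sqnormB dotvZr sqnormZ cross; nra.
Qed.

End InnerProduct.

Section Logistic.
Context {R : realType}.
Implicit Types m : R.

Definition logistic m := ln (1 + expR (- m)).

Definition logistic_weight m := expR (- m) / (1 + expR (- m)).

Lemma logistic_weight_ge0 m : 0 <= logistic_weight m.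
Proof. by rewrite divr_ge0 // ?addr_ge0 ?expR_ge0. Qed.

Lemma logistic_weight_le1 m : logistic_weight m <= 1.
Proof. by rewrite ler_pdivrMr ?mul1r ?lerDr // addr_gt0 ?expR_gt0. Qed.

(* With p := logistic_weight m, 1 + exp(-m') = (1 + exp(-m)) ((1 - p) 1 + p exp(m - m')),
   so this is concavity of ln at the points 1 and exp(m - m'). *)
Lemma logistic_tangent m m' :
  logistic m - logistic_weight m * (m' - m) <= logistic m'.
Proof.
set s := expR (- m); set p := logistic_weight m.
have s_gt0 : 0 < s by rewrite expR_gt0.
have s1_gt0 : 0 < 1 + s by rewrite addr_gt0.
have := concave_ln (Itv01 (logistic_weight_ge0 m) (logistic_weight_le1 m))
  (expR_gt0 (m - m')) ltr01.
rewrite !convRE /= expRK ln1 mulr0 addr0 mulr1 -/p => concave.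
have split_s' : 1 + expR (- m') = (1 + s) * (p * expR (m - m') + (1 - p)).
  have em : expR m = s^-1 by rewrite /s expRN invrK.
  rewrite /p /logistic_weight -/s [m - m']addrC expRD em.
  by field; rewrite !gt_eqF.
have mix_gt0 : 0 < p * expR (m - m') + (1 - p).
  by rewrite -(pmulr_rgt0 _ s1_gt0) -split_s' addr_gt0 ?expR_gt0.
rewrite /logistic split_s' lnM ?posrE // -/s.
lra.
Qed.

End Logistic.

Section LogisticRegression.
Context {R : realType} {d n : nat} (x : 'I_n -> 'rV[R]_d) (y : 'I_n -> R).
Implicit Types w u : 'rV[R]_d.

Definition mean_logistic_weight w :=
  n%:R^-1 * \sum_(i < n) logistic_weight (y i * dotv (x i) w).

Lemma mean_logistic_weight_ge0 w : 0 <= mean_logistic_weight w.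
Proof. by rewrite mulr_ge0 ?invr_ge0 // sumr_ge0 // => i _; apply: logistic_weight_ge0. Qed.

Lemma mean_logistic_weight_le1 w : mean_logistic_weight w <= 1.
Proof.
have sum_le_n : \sum_(i < n) logistic_weight (y i * dotv (x i) w) <= n%:R.
  rewrite -[n in X in _ <= X]card_ord -sumr_const.
  by apply: ler_sum => i _; apply: logistic_weight_le1.
apply: le_trans (ler_wpM2l _ sum_le_n) _; first by rewrite invr_ge0.
by case: n => [|n']; rewrite ?invr0 ?mul0r // mulVf ?pnatr_eq0.
Qed.

Lemma dotv_logloss_grad w c :
  dotv (logloss_grad x y w) c = n%:R^-1 *
    \sum_(i < n) - (logistic_weight (y i * dotv (x i) w) * y i) * dotv (x i) c.
Proof.
rewrite dotvZl dotv_suml; congr (_ * _).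
by apply: eq_bigr => i _; rewrite dotvZl mulNr.
Qed.

Lemma logloss_tangent w u :
  logloss x y w + dotv (logloss_grad x y w) (u - w) <= logloss x y u.
Proof.
rewrite dotv_logloss_grad -mulrDr ler_wpM2l ?invr_ge0 // -big_split ler_sum // => i _.
rewrite dotvBr -/(logistic _).
have -> : - (logistic_weight (y i * dotv (x i) w) * y i) * (dotv (x i) u - dotv (x i) w)
  = - (logistic_weight (y i * dotv (x i) w) * (y i * dotv (x i) u - y i * dotv (x i) w)).
  by ring.
exact: logistic_tangent.
Qed.

Lemma dotv_logloss_grad_le gamma wstar w :
  (forall i, gamma <= y i * dotv (x i) wstar) ->
  dotv (logloss_grad x y w) wstar <= - (gamma * mean_logistic_weight w).
Proof.
move=> margin; rewrite dotv_logloss_grad mulrCA -mulrN ler_wpM2l ?invr_ge0 //.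
rewrite mulr_sumr -sumrN ler_sum // => i _.
by rewrite mulNr -mulrA lerN2 mulrC ler_wpM2l ?logistic_weight_ge0 ?margin.
Qed.

Lemma sqnorm_logloss_grad_le w :
  (forall i, `|y i| <= 1) -> (forall i, sqnorm (x i) <= 1) ->
  sqnorm (logloss_grad x y w) <= mean_logistic_weight w ^+ 2.
Proof.
move=> y_le1 x_le1; rewrite sqnormZ exprMn; apply: ler_wpM2l; first exact: sqr_ge0.
apply: le_trans (sqnorm_sumZ_le _ _ _ x_le1) _.
have lw_ge0 i : 0 <= logistic_weight (y i * dotv (x i) w) by apply: logistic_weight_ge0.
rewrite ler_sqr ?nnegrE ?sumr_ge0 //; apply: ler_sum => i _.
by rewrite normrM normrN (ger0_norm (lw_ge0 i)) ler_piMr ?lw_ge0.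
Qed.

Section Descent.
Variables (gamma eta : R) (wstar u1 w0 : 'rV[R]_d).
Hypotheses (y_le1 : forall i, `|y i| <= 1) (x_le1 : forall i, sqnorm (x i) <= 1).
Hypotheses (margin : forall i, gamma <= y i * dotv (x i) wstar).
Hypotheses (gamma_gt0 : 0 < gamma) (eta_gt0 : 0 < eta).

Let u := u1 + (eta / (2 * gamma)) *: wstar.

Lemma logloss_gd_step w :
  sqnorm (w - eta *: logloss_grad x y w - u)
    <= sqnorm (w - u) + 2 * eta * (logloss x y u1 - logloss x y w).
Proof.
apply: (sqnorm_descent_step _ _ (mean_logistic_weight w)) => //.
- exact: logloss_tangent.
- exact: dotv_logloss_grad_le.
- apply: le_trans (sqnorm_logloss_grad_le w y_le1 x_le1) _.
  by rewrite expr2 ler_piMr ?mean_logistic_weight_ge0 ?mean_logistic_weight_le1.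
Qed.

Lemma logloss_gd_sum t :
  sqnorm (gd_iter x y eta w0 t - u)
    + 2 * eta * \sum_(k < t) logloss x y (gd_iter x y eta w0 k)
    <= sqnorm (w0 - u) + 2 * eta * t%:R * logloss x y u1.
Proof.
elim: t => [|t IH]; first by rewrite big_ord0 !(mulr0, mul0r) !addr0.
have := logloss_gd_step (gd_iter x y eta w0 t).
rewrite big_ord_recr /= -(natr1 t); lra.
Qed.

End Descent.

End LogisticRegression.

Theorem mainTheorem10 (R : realType) (d n : nat)
  (x : 'I_n -> 'rV[R]_d) (y : 'I_n -> R) (gamma eta : R)
  (wstar w0 u1 : 'rV[R]_d)
  (hy : forall i, y i = 1 \/ y i = -1)
  (hx : forall i, sqnorm (x i) <= 1)
  (hsep : forall i, y i * dotv (x i) wstar >= gamma)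
  (hgamma : 0 < gamma)
  (hwstar : sqnorm wstar = 1)
  (heta : 0 < eta) :
  let u2 := (eta / (2 * gamma)) *: wstar in
  let u := u1 + u2 in
  forall t : nat, (1 <= t)%N ->
    sqnorm (gd_iter x y eta w0 t - u) / (2 * eta * t%:R)
    + t%:R^-1 * \sum_(k < t) logloss x y (gd_iter x y eta w0 k)
    <= logloss x y u1 + sqnorm (w0 - u) / (2 * eta * t%:R).
Proof.
move=> u2 u t t_ge1.
have y_le1 i : `|y i| <= 1 by case: (hy i) => ->; rewrite ?normrN normr1.
have := logloss_gd_sum _ _ _ _ _ u1 w0 y_le1 hx hsep hgamma heta t.
rewrite -/u2 -/u; set S := \sum_(k < t) _ => sum_bound.
have t_gt0 : 0 < t%:R :> R by rewrite ltr0n.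
have c_gt0 : 0 < 2 * eta * t%:R by rewrite !mulr_gt0.
have mean_S : t%:R^-1 * S * (2 * eta * t%:R) = 2 * eta * S by field; rewrite gt_eqF.
rewrite -(ler_pM2r c_gt0) [X in X <= _]mulrDl [X in _ <= X]mulrDl mean_S.
rewrite !divfK ?gt_eqF //; lra.
Qed.
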